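(* Let $n\ge2$, let $-1=x_1<\cdots<x_n=1$ be real numbers, and let $U_X=\{-1,1\}\times\{x_1,\ldots,x_n\}$. 1. For any labels $y_1,\ldots,y_n\in\mathbb{R}$, there exists $\mu\in\mathcal{M}(\mathbb{U},\mathbb{R})$ supported in $U_X$ with $f_\mu(x_i)=y_i$ for all $i\in[n]$ (i.e., feasible for the regression problem $\inf\int_{\mathbb{U}}|d\mu(u)|$ subject to $f_\mu(x_i)=y_i$ for all $i$). 2. For any $k\ge1$ and labels $y_1,\ldots,y_n\in[k]$, there exists $\nu\in\mathcal{M}(\mathbb{U},\mathbb{R}^k)$ supported in $U_X$ with $(e_{y_i}-e_l)^Tf_\nu(x_i)\ge\mathbb{1}(y_i\neq l)$ for all $i\in[n]$ and $l\in[k]$ (i.e., feasible for the classification problem $\inf\int_{\mathbb{U}}\|d\mu(u)\|$ subject to these constraints).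
   Context: $[n]=\{1,\ldots,n\}$; $e_j$ is the $j$-th canonical basis vector of $\mathbb{R}^k$; $\mathbb{1}(y_i\neq l)$ is $1$ if $y_i\neq l$ and $0$ otherwise. Let $\mathbb{U}=\{-1,1\}\times[-1,1]$. For $u=(s,c)\in\mathbb{U}$ and $x\in\mathbb{R}$ let $\phi_u(x)=(s(x-c))_+$, where $(t)_+=\max(t,0)$. $\mathcal{M}(\mathbb{U},\mathbb{R}^k)$ is the set of (finite) signed Radon measures on $\mathbb{U}$ with values in $\mathbb{R}^k$, and $f_\mu(x)=\int_{\mathbb{U}}\phi_u(x)\,d\mu(u)$. *)

From mathcomp Require Import all_boot all_order all_algebra.
From mathcomp Require Import reals.
Set Implicit Arguments. Unset Strict Implicit. Unset Printing Implicit Defensive.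
Import Order.TTheory GRing.Theory Num.Theory.
Local Open Scope ring_scope.

Definition inU (R : realType) (u : R * R) : Prop :=
  (u.1 = -1 \/ u.1 = 1) /\ -1 <= u.2 <= 1.

Definition phi (R : realType) (u : R * R) (x : R) : R :=
  Num.max (u.1 * (x - u.2)) 0.

(* A finitely supported (purely atomic) V-valued signed measure on U,
   given as a finite list of atoms (u, weight) : it denotes
   sum_{(u,w) in mu} w * delta_u.  Any measure in M(U, V) supported in a
   finite set is of this form. *)
Definition atomic_measure (R : realType) (V : lmodType R) := seq ((R * R) * V).

Definition atoms_in_U (R : realType) (V : lmodType R) (mu : atomic_measure V) : Prop :=
  forall a, a \in mu -> inU a.1.

Definition f_mu (R : realType) (V : lmodType R) (mu : atomic_measure V) (x : R) : V :=
  \sum_(a <- mu) phi a.1 x *: a.2.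

Definition supported_in (R : realType) (V : lmodType R) (mu : atomic_measure V)
  (S : R * R -> Prop) : Prop :=
  forall a, a \in mu -> a.2 != 0 -> S a.1.

Definition U_X (R : realType) (n : nat) (x : 'I_n -> R) (u : R * R) : Prop :=
  (u.1 = -1 \/ u.1 = 1) /\ exists j : 'I_n, u.2 = x j.

From mathcomp Require Import all_boot all_order all_algebra.
From mathcomp Require Import reals.
Import Order.TTheory GRing.Theory Num.Theory.
Local Open Scope ring_scope.

(* Interpolate left to right.  One atom at (-1, x_n), whose ridge function
   is x_n - t on the nodes, fits the first value; thereafter the atom at
   (1, x_(m-1)) vanishes at x_1, ..., x_(m-1) and is positive at x_m, so its
   weight can be chosen to fit the m-th value without disturbing the earlier
   ones.  For classification, interpolating the one-hot vectors e_(y_i)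
   yields margins exactly 1(y_i != l). *)

Section RidgeAtoms.
Variables (R : realType) (V : lmodType R).
Implicit Types (c t : R) (w : V) (mu : atomic_measure V).

Lemma f_mu_cons (a : (R * R) * V) mu t :
  f_mu (a :: mu) t = phi a.1 t *: a.2 + f_mu mu t.
Proof. by rewrite /f_mu big_cons. Qed.

Lemma f_mu_cons_right_le c t w mu :
  t <= c -> f_mu (((1, c), w) :: mu) t = f_mu mu t.
Proof.
by move=> tc; rewrite f_mu_cons /phi /= mul1r max_r ?subr_le0 // scale0r add0r.
Qed.

Lemma f_mu_cons_right_ge c t w mu :
  c <= t -> f_mu (((1, c), w) :: mu) t = (t - c) *: w + f_mu mu t.
Proof. by move=> ct; rewrite f_mu_cons /phi /= mul1r max_l ?subr_ge0. Qed.

Lemma f_mu_cons_left_le c t w mu :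
  t <= c -> f_mu (((-1, c), w) :: mu) t = (c - t) *: w + f_mu mu t.
Proof.
by move=> tc; rewrite f_mu_cons /phi /= mulN1r opprB max_l ?subr_ge0.
Qed.

End RidgeAtoms.

Section Interpolation.
Variables (R : realType) (n : nat) (x : 'I_n -> R).
Hypothesis n_ge2 : (2 <= n)%N.
Hypothesis x_incr : forall i j : 'I_n, (i < j)%N -> x i < x j.

Lemma nodes_le (i j : 'I_n) : (i <= j)%N -> x i <= x j.
Proof.
by rewrite leq_eqVlt => /predU1P[/val_inj -> // | /x_incr/ltW].
Qed.

Let n_gt0 : (0 < n)%N. Proof. exact: leq_trans n_ge2. Qed.
Let pred_n_lt : (n.-1 < n)%N. Proof. by rewrite prednK. Qed.
Let i_first : 'I_n := Ordinal n_gt0.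
Let i_last : 'I_n := Ordinal pred_n_lt.

Let le_last (j : 'I_n) : (j <= i_last)%N.
Proof. by rewrite /= -ltnS prednK. Qed.

Let first_lt_last : (i_first < i_last)%N.
Proof. by rewrite /= -ltnS prednK. Qed.

Lemma exists_prefix_interpolant {V : lmodType R} (y : 'I_n -> V) {m : nat} :
  (m <= n)%N ->
  exists mu : atomic_measure V,
    (forall a, a \in mu -> U_X x a.1) /\
    forall i : 'I_n, (i < m)%N -> f_mu mu (x i) = y i.
Proof.
elim: m => [_ | [|m] IHm lt_m1_n]; first by exists [::].
- have gap : x i_last - x i_first != 0 by rewrite subr_eq0 gt_eqF ?x_incr.
  exists [:: ((-1, x i_last), (x i_last - x i_first)^-1 *: y i_first)]; split.
    by move=> a; rewrite inE => /eqP -> /=; split; [left | exists i_last].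
  move=> i; rewrite ltnS leqn0 => /eqP i_0.
  have -> : i = i_first by apply: val_inj.
  rewrite f_mu_cons_left_le ?nodes_le // scalerKV //.
  by rewrite /f_mu big_nil addr0.
- have [mu [mu_UX mu_fit]] := IHm (ltnW lt_m1_n).
  have lt_m_n : (m < n)%N by apply: ltn_trans lt_m1_n.
  pose jm := Ordinal lt_m_n; pose jm1 := Ordinal lt_m1_n.
  have gap : x jm1 - x jm != 0 by rewrite subr_eq0 gt_eqF // x_incr /=.
  exists (((1, x jm), (x jm1 - x jm)^-1 *: (y jm1 - f_mu mu (x jm1))) :: mu).
  split.
    move=> a; rewrite inE => /predU1P[-> | /mu_UX //].
    by split; [right | exists jm].
  move=> i; rewrite ltnS leq_eqVlt => /predU1P[i_m1 | lt_i_m1].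
    have -> : i = jm1 by apply: val_inj.
    by rewrite f_mu_cons_right_ge ?nodes_le // scalerKV // subrK.
  by rewrite f_mu_cons_right_le ?nodes_le ?mu_fit // -ltnS.
Qed.

Hypothesis x_first : forall i : 'I_n, nat_of_ord i = 0%N -> x i = -1.
Hypothesis x_last : forall i : 'I_n, nat_of_ord i = n.-1 -> x i = 1.

Lemma nodes_in_unit_interval (j : 'I_n) : -1 <= x j <= 1.
Proof. by rewrite -(x_first i_first) // -(x_last i_last) // !nodes_le. Qed.

Lemma U_X_inU (u : R * R) : U_X x u -> inU u.
Proof. by move=> [s_pm [j u2]]; split=> //; rewrite u2 nodes_in_unit_interval. Qed.

Lemma exists_interpolant {V : lmodType R} (y : 'I_n -> V) :
  exists mu : atomic_measure V,
    atoms_in_U mu /\ supported_in mu (U_X x) /\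
    forall i : 'I_n, f_mu mu (x i) = y i.
Proof.
have [mu [mu_UX mu_fit]] := exists_prefix_interpolant y (leqnn n).
exists mu; split; [|split].
- by move=> a /mu_UX /U_X_inU.
- by move=> a /mu_UX.
- by move=> i; apply: mu_fit.
Qed.

End Interpolation.

Lemma one_hot_margin (R : realType) (k : nat) (c l : 'I_k) :
  (if c != l then 1 else 0) <=
    (delta_mx 0 c : 'rV[R]_k) ord0 c - (delta_mx 0 c : 'rV[R]_k) ord0 l.
Proof.
by rewrite !mxE !eqxx /= [l == c]eq_sym; case: (c == l); rewrite /= ?subrr ?subr0.
Qed.

Theorem lemma3 (R : realType) (n : nat) (x : 'I_n -> R)
  (hn : (2 <= n)%N)
  (hinc : forall i j : 'I_n, (i < j)%N -> x i < x j)
  (hfirst : forall i : 'I_n, nat_of_ord i = 0%N -> x i = -1)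
  (hlast : forall i : 'I_n, nat_of_ord i = n.-1 -> x i = 1) :
  (* 1. regression feasibility *)
  (forall y : 'I_n -> R,
     exists mu : atomic_measure R^o,
       atoms_in_U mu /\ supported_in mu (U_X x) /\
       forall i : 'I_n, f_mu mu (x i) = y i)
  /\
  (* 2. classification feasibility, labels in [k] represented by 'I_k *)
  (forall (k : nat) (y : 'I_n -> 'I_k), (1 <= k)%N ->
     exists nu : atomic_measure 'rV[R]_k,
       atoms_in_U nu /\ supported_in nu (U_X x) /\
       forall (i : 'I_n) (l : 'I_k),
         (if y i != l then 1 else 0) <=
           (f_mu nu (x i)) ord0 (y i) - (f_mu nu (x i)) ord0 l).
Proof.
split; first by move=> y; apply: exists_interpolant.
move=> k y _.
have [nu [nu_U [nu_UX nu_fit]]] :=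
  exists_interpolant _ _ x hn hinc hfirst hlast
    (fun i => delta_mx 0 (y i) : 'rV[R]_k).
exists nu; split=> //; split=> // i l.
by rewrite nu_fit; apply: one_hot_margin.
Qed.
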